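(* Let $C_H>0$, $c_H>0$ and $\theta\in(0,1)$, and set $\Theta=\theta\,\frac{1-e^{-c_H}}{1+e^{-c_H}}$. Let $y=(y_j)_{j\in\mathbb N}\in\ell^\infty(\mathbb N)$ have nonnegative entries and satisfy $$\forall j\in\mathbb N,\quad y_j\le C_He^{-c_Hj}+\Theta\sum_{k=0}^{+\infty}e^{-c_H|j-1-k|}y_k.$$ Then $y_j\le\rho r^j$ for all $j\in\mathbb N$, where $$r=\cosh(c_H)-2\sinh\!\left(\tfrac{c_H}{2}\right)\sqrt{\cosh^2\!\left(\tfrac{c_H}{2}\right)-\theta}\in\,]e^{-c_H},1[\quad\text{and}\quad \rho=\frac{C_H}{\Theta}(r-e^{-c_H})>0.$$ *)

From Stdlib Require Import Reals.
From Coquelicot Require Import Coquelicot.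
Open Scope R_scope.

Definition Theta_of (cH theta : R) : R :=
  theta * (1 - exp (- cH)) / (1 + exp (- cH)).

Definition r_of (cH theta : R) : R :=
  cosh cH - 2 * sinh (cH / 2) * sqrt ((cosh (cH / 2)) ^ 2 - theta).

Definition rho_of (CH cH theta : R) : R :=
  CH / Theta_of cH theta * (r_of cH theta - exp (- cH)).

(* The kernel e^{-c|j-1-k|} maps the geometric sequence (r^k) to an explicit
   combination of r^j and e^{-cj}.  The number r is the root of
   (r - e^{-c}) (1 - e^{-c} r) = Theta (1 - e^{-2c}) lying in ]e^{-c}, 1[, and for it
   z_j = rho r^j solves the inequality of the statement with equality.  The kernel
   has row sums at most (1 + e^{-c}) / (1 - e^{-c}), so Theta times it is a positive
   operator of norm at most theta < 1 on bounded sequences: by induction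
   y_j <= z_j + theta^n sup y for every n, and letting n grow gives y <= z. *)
From Stdlib Require Import Reals Lra Psatz.
From Coquelicot Require Import Coquelicot.
Open Scope R_scope.

Lemma exp_mul_INR (c : R) (n : nat) : exp (c * INR n) = exp c ^ n.
Proof.
  rewrite <- Rpower_pow by apply exp_pos.
  unfold Rpower. rewrite ln_exp. f_equal. ring.
Qed.

Lemma cosh_pos (x : R) : 0 < cosh x.
Proof. unfold cosh. pose proof (exp_pos x). pose proof (exp_pos (- x)). lra. Qed.

Lemma sinh_pos (x : R) : 0 < x -> 0 < sinh x.
Proof. intro hx. rewrite <- sinh_0. now apply sinh_lt. Qed.

Lemma exp_neg_lt1 (c : R) : 0 < c -> exp (- c) < 1.
Proof. intro hc. rewrite <- exp_0. apply exp_increasing. lra. Qed.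

Lemma cosh_sub_sinh (x : R) : cosh x - sinh x = exp (- x).
Proof. unfold cosh, sinh. field. Qed.

Lemma cosh2_sub_sinh2 (x : R) : cosh x ^ 2 - sinh x ^ 2 = 1.
Proof.
  transitivity (exp x * exp (- x)); [unfold cosh, sinh; field |].
  now rewrite <- exp_plus, Rplus_opp_r, exp_0.
Qed.

Lemma cosh_double (x : R) : cosh (2 * x) = cosh x ^ 2 + sinh x ^ 2.
Proof.
  unfold cosh, sinh.
  replace (2 * x) with (x + x) by ring. replace (- (x + x)) with (- x + - x) by ring.
  rewrite !exp_plus. field.
Qed.

Lemma r_of_half_angle (c theta : R) :
  r_of c theta = cosh (c / 2) ^ 2 + sinh (c / 2) ^ 2
                 - 2 * sinh (c / 2) * sqrt (cosh (c / 2) ^ 2 - theta).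
Proof. unfold r_of. rewrite <- cosh_double. do 2 f_equal. field. Qed.

Lemma exp_neg_half_angle (c : R) : exp (- c) = (cosh (c / 2) - sinh (c / 2)) ^ 2.
Proof.
  rewrite cosh_sub_sinh. simpl. rewrite Rmult_1_r, <- exp_plus. f_equal. field.
Qed.

(* [h], [s] stand for [cosh (c / 2)], [sinh (c / 2)]: then [(h - s) ^ 2 = exp (- c)] and
   the root below is [r_of c theta]. *)
Section CharacteristicRoot.

Variables h s theta : R.
Hypotheses (hs : h ^ 2 - s ^ 2 = 1) (s_pos : 0 < s) (h_pos : 0 < h)
  (theta_pos : 0 < theta) (theta_lt1 : theta < 1).

Lemma sqrt_sub_sq_between : s < sqrt (h ^ 2 - theta) < h.
Proof.
  set (D := sqrt (h ^ 2 - theta)).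
  assert (D_sq : D * D = h ^ 2 - theta) by (apply sqrt_sqrt; nra).
  assert (D_ge0 : 0 <= D) by apply sqrt_pos.
  split; nra.
Qed.

Lemma char_root_between :
  (h - s) ^ 2 < h ^ 2 + s ^ 2 - 2 * s * sqrt (h ^ 2 - theta) < 1.
Proof. pose proof sqrt_sub_sq_between. split; nra. Qed.

Lemma char_root_eq :
  let q := (h - s) ^ 2 in let r := h ^ 2 + s ^ 2 - 2 * s * sqrt (h ^ 2 - theta) in
  theta * (1 - q) ^ 2 = (r - q) * (1 - q * r).
Proof.
  intros q r.
  set (D := sqrt (h ^ 2 - theta)) in r.
  assert (D_sq : D * D = h ^ 2 - theta) by (apply sqrt_sqrt; nra).
  assert (q_hs : q * (h + s) ^ 2 = 1) by (unfold q; nra).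
  assert (one_sub_q : 1 - q = 2 * s * (h - s)) by (unfold q; nra).
  assert (r_sub_q : r - q = 2 * s * (h - D)) by (unfold r, q; ring).
  assert (one_sub_qr : 1 - q * r = 2 * s * q * (h + D)).
  { rewrite <- q_hs. unfold r. ring. }
  rewrite one_sub_q, r_sub_q, one_sub_qr.
  replace theta with ((h - D) * (h + D)) by nra.
  unfold q. ring.
Qed.

End CharacteristicRoot.

Lemma r_of_between (c theta : R) :
  0 < c -> 0 < theta -> theta < 1 -> exp (- c) < r_of c theta < 1.
Proof.
  intros hc h0 h1.
  rewrite r_of_half_angle, exp_neg_half_angle.
  apply char_root_between; auto using cosh2_sub_sinh2, cosh_pos.
  apply sinh_pos; lra.
Qed.

Lemma Theta_of_char_eq (c theta : R) :
  0 < c -> 0 < theta -> theta < 1 ->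
  Theta_of c theta * (1 - exp (- c) ^ 2)
  = (r_of c theta - exp (- c)) * (1 - exp (- c) * r_of c theta).
Proof.
  intros hc h0 h1.
  pose proof (exp_pos (- c)).
  transitivity (theta * (1 - exp (- c)) ^ 2); [unfold Theta_of; field; lra |].
  rewrite r_of_half_angle, exp_neg_half_angle.
  apply char_root_eq; auto using cosh2_sub_sinh2.
Qed.

Lemma Theta_of_pos (c theta : R) : 0 < c -> 0 < theta -> 0 < Theta_of c theta.
Proof.
  intros hc h0. pose proof (exp_pos (- c)). pose proof (exp_neg_lt1 c hc).
  unfold Theta_of. apply Rdiv_lt_0_compat; [apply Rmult_lt_0_compat |]; lra.
Qed.

Lemma rho_of_pos (CH c theta : R) :
  0 < CH -> 0 < c -> 0 < theta -> theta < 1 -> 0 < rho_of CH c theta.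
Proof.
  intros hC hc h0 h1.
  pose proof (r_of_between c theta hc h0 h1). pose proof (Theta_of_pos c theta hc h0).
  unfold rho_of. apply Rmult_lt_0_compat; [apply Rdiv_lt_0_compat |]; lra.
Qed.

Definition decay_kernel (c : R) (j k : nat) : R := exp (- c * Rabs (INR j - 1 - INR k)).

Lemma decay_kernel_SS (c : R) (j k : nat) :
  decay_kernel c (S j) (S k) = decay_kernel c j k.
Proof. unfold decay_kernel. rewrite !S_INR. do 3 f_equal. ring. Qed.

Lemma decay_kernel_S0 (c : R) (j : nat) : decay_kernel c (S j) 0 = exp (- c) ^ j.
Proof.
  unfold decay_kernel. rewrite S_INR, <- exp_mul_INR. do 2 f_equal.
  rewrite Rabs_pos_eq; [simpl; ring | simpl; pose proof (pos_INR j); lra].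
Qed.

Lemma decay_kernel_0l (c : R) (k : nat) : decay_kernel c 0 k = exp (- c) ^ S k.
Proof.
  unfold decay_kernel. rewrite <- exp_mul_INR, S_INR. do 2 f_equal.
  rewrite <- Rabs_Ropp, Rabs_pos_eq; [simpl; ring | simpl; pose proof (pos_INR k); lra].
Qed.

(* Row [S j] is row [j] shifted by one index, so its sum against [s ^ k] is
   [exp (- c) ^ j + s * (row j sum)]; the closed form solves this recursion. *)
Lemma is_series_decay_kernel_pow (c s : R) (j : nat) :
  0 <= s -> exp (- c) * s < 1 -> s <> exp (- c) ->
  is_series (fun k => decay_kernel c j k * s ^ k)
    ((exp (- c) / (1 - exp (- c) * s) + 1 / (s - exp (- c))) * s ^ j
     - exp (- c) ^ j / (s - exp (- c))).
Proof.
  intros s_ge0 qs_lt1 s_neq.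
  set (q := exp (- c)) in *.
  assert (q_pos : 0 < q) by apply exp_pos.
  apply Rminus_eq_contra in s_neq.
  induction j as [|j IH].
  - replace (_ - _) with (q * / (1 - q * s)) by (simpl; field; lra).
    apply (is_series_ext (fun k => q * (q * s) ^ k)).
    { intro k. rewrite decay_kernel_0l, Rpow_mult_distr. fold q. simpl. ring. }
    apply (is_series_scal_l q (fun k => (q * s) ^ k)), is_series_geom.
    rewrite Rabs_pos_eq; nra.
  - apply is_series_decr_1.
    rewrite decay_kernel_S0. fold q.
    apply (is_series_ext (fun k => s * (decay_kernel c j k * s ^ k))).
    { intro k. rewrite decay_kernel_SS. simpl. ring. }
    replace (plus _ _) with (s * ((q / (1 - q * s) + 1 / (s - q)) * s ^ j - q ^ j / (s - q))).
    + exact (is_series_scal_l s _ _ IH).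
    + unfold plus, opp; simpl. field. lra.
Qed.

Lemma is_series_decay_kernel (c : R) (j : nat) : 0 < c ->
  is_series (decay_kernel c j) ((1 + exp (- c) - exp (- c) ^ j) / (1 - exp (- c))).
Proof.
  intro hc.
  pose proof (exp_neg_lt1 c hc) as q_lt1.
  apply (is_series_ext (fun k => decay_kernel c j k * 1 ^ k)).
  { intro k. now rewrite pow1, Rmult_1_r. }
  replace (_ / _) with ((exp (- c) / (1 - exp (- c) * 1) + 1 / (1 - exp (- c))) * 1 ^ j
                        - exp (- c) ^ j / (1 - exp (- c))) by (rewrite pow1; field; lra).
  apply is_series_decay_kernel_pow; lra.
Qed.

Lemma Theta_of_row_sum_le (c theta : R) (j : nat) : 0 < c -> 0 <= theta ->
  Theta_of c theta * Series (decay_kernel c j) <= theta.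
Proof.
  intros hc h0.
  pose proof (exp_pos (- c)) as q_pos.
  pose proof (exp_neg_lt1 c hc) as q_lt1.
  rewrite (is_series_unique _ _ (is_series_decay_kernel c j hc)).
  unfold Theta_of.
  replace (_ * _) with (theta - theta * exp (- c) ^ j / (1 + exp (- c))) by (field; lra).
  assert (0 <= theta * exp (- c) ^ j / (1 + exp (- c))).
  { apply Rdiv_le_0_compat; [apply Rmult_le_pos, pow_le|]; lra. }
  lra.
Qed.

Lemma rho_pow_fixed_point (CH c theta : R) (j : nat) :
  0 < c -> 0 < theta -> theta < 1 ->
  rho_of CH c theta * r_of c theta ^ j
  = CH * exp (- c) ^ j
    + Theta_of c theta
      * Series (fun k => decay_kernel c j k * (rho_of CH c theta * r_of c theta ^ k)).
Proof.
  intros hc h0 h1.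
  pose proof (r_of_between c theta hc h0 h1) as [q_lt_r r_lt1].
  pose proof (Theta_of_char_eq c theta hc h0 h1) as char.
  pose proof (exp_pos (- c)) as q_pos.
  pose proof (Theta_of_pos c theta hc h0) as Theta_pos.
  pose proof (is_series_decay_kernel_pow c (r_of c theta) j ltac:(lra) ltac:(nra) ltac:(lra))
    as row_sum.
  rewrite (Series_ext _ (fun k => rho_of CH c theta * (decay_kernel c j k * r_of c theta ^ k)))
    by (intro; ring).
  rewrite Series_scal_l, (is_series_unique _ _ row_sum).
  unfold rho_of.
  set (q := exp (- c)) in *. set (r := r_of c theta) in *. set (T := Theta_of c theta) in *.
  assert (ratio : (r - q) / T = (1 - q ^ 2) / (1 - q * r)).
  { field_simplify_eq; [lra | split; nra]. }
  transitivity (CH * ((r - q) / T) * r ^ j); [field; lra |].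
  rewrite ratio. field. repeat split; nra.
Qed.

Lemma le_of_le_add_geom (x u M theta : R) :
  0 <= theta -> theta < 1 -> (forall n, x <= u + theta ^ n * M) -> x <= u.
Proof.
  intros h0 h1 hx.
  assert (lim : is_lim_seq (fun n => u + theta ^ n * M) (u + 0 * M)).
  { apply is_lim_seq_plus'; [apply is_lim_seq_const |].
    apply (is_lim_seq_scal_r (fun n => theta ^ n) M 0).
    apply is_lim_seq_geom. rewrite Rabs_pos_eq; lra. }
  replace u with (u + 0 * M) by ring.
  exact (is_lim_seq_le (fun _ => x) _ x _ hx (is_lim_seq_const x) lim).
Qed.

Section Comparison.

Variables (a : nat -> nat -> R) (f y z : nat -> R) (Theta theta : R).
Hypotheses (a_ge0 : forall j k, 0 <= a j k)
  (Theta_ge0 : 0 <= Theta) (theta_ge0 : 0 <= theta) (theta_lt1 : theta < 1)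
  (row_sums : forall j, ex_series (a j) /\ Theta * Series (a j) <= theta)
  (z_ge0 : forall j, 0 <= z j)
  (z_series : forall j, ex_series (fun k => a j k * z k))
  (z_super : forall j, f j + Theta * Series (fun k => a j k * z k) <= z j)
  (y_ge0 : forall j, 0 <= y j)
  (y_sub : forall j, y j <= f j + Theta * Series (fun k => a j k * y k)).

Lemma subsolution_le_geom (M : R) : (forall j, y j <= M) ->
  forall n j, y j <= z j + theta ^ n * M.
Proof.
  intros y_le n.
  assert (M_ge0 : 0 <= M) by (specialize (y_le 0%nat); specialize (y_ge0 0%nat); lra).
  induction n as [|n IH]; intro j.
  - specialize (y_le j). specialize (z_ge0 j). simpl. lra.
  - set (B := theta ^ n * M) in IH.
    assert (B_ge0 : 0 <= B) by (apply Rmult_le_pos; [apply pow_le |]; lra).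
    destruct (row_sums j) as [a_series a_sum].
    assert (Ba_series : ex_series (fun k => B * a j k)) by exact (ex_series_scal_l B _ a_series).
    assert (comp : Series (fun k => a j k * y k)
                   <= Series (fun k => a j k * z k) + B * Series (a j)).
    { rewrite <- Series_scal_l, <- Series_plus by auto.
      apply Series_le; [intro k |].
      - specialize (IH k). specialize (y_ge0 k). specialize (a_ge0 j k). split; nra.
      - exact (ex_series_plus _ _ (z_series j) Ba_series). }
    specialize (y_sub j). specialize (z_super j).
    replace (theta ^ S n * M) with (theta * B) by (unfold B; simpl; ring).
    nra.
Qed.

Lemma subsolution_le_supersolution : (exists M, forall j, y j <= M) -> forall j, y j <= z j.
Proof.
  intros [M y_le] j.
  apply (le_of_le_add_geom _ _ M theta); auto.
  intro n. now apply subsolution_le_geom.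
Qed.

End Comparison.

Theorem lemma3p5 (CH cH theta : R) (y : nat -> R)
  (hCH : 0 < CH) (hcH : 0 < cH) (hth0 : 0 < theta) (hth1 : theta < 1)
  (hbdd : exists M : R, forall j : nat, Rabs (y j) <= M)
  (hnn : forall j : nat, 0 <= y j)
  (hineq : forall j : nat,
     y j <= CH * exp (- cH * INR j)
            + Theta_of cH theta
              * Series (fun k : nat => exp (- cH * Rabs (INR j - 1 - INR k)) * y k)) :
  (exp (- cH) < r_of cH theta /\ r_of cH theta < 1) /\
  0 < rho_of CH cH theta /\
  (forall j : nat, y j <= rho_of CH cH theta * (r_of cH theta) ^ j).
Proof.
  pose proof (r_of_between cH theta hcH hth0 hth1) as [q_lt_r r_lt1].
  pose proof (exp_pos (- cH)) as q_pos.
  split; [| split]; auto using rho_of_pos.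
  set (z j := rho_of CH cH theta * r_of cH theta ^ j).
  apply (subsolution_le_supersolution (decay_kernel cH) (fun j => CH * exp (- cH) ^ j)
           y z (Theta_of cH theta) theta); auto.
  - intros j k. apply Rlt_le, exp_pos.
  - now apply Rlt_le, Theta_of_pos.
  - now apply Rlt_le.
  - intro j. split; [exact (ex_intro _ _ (is_series_decay_kernel cH j hcH)) |].
    apply Theta_of_row_sum_le; lra.
  - intro j. pose proof (rho_of_pos CH cH theta hCH hcH hth0 hth1).
    apply Rmult_le_pos, pow_le; lra.
  - intro j. apply (ex_series_ext (fun k => rho_of CH cH theta
                                           * (decay_kernel cH j k * r_of cH theta ^ k))).
    { intro k. unfold z. simpl. ring. }
    exact (ex_series_scal_l _ _ (ex_intro _ _
      (is_series_decay_kernel_pow cH (r_of cH theta) j ltac:(lra) ltac:(nra) ltac:(lra)))).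
  - intro j. unfold z. rewrite (rho_pow_fixed_point CH cH theta j) by lra. lra.
  - intro j. rewrite <- exp_mul_INR. apply hineq.
  - destruct hbdd as [M hM]. exists M. intro j. eapply Rle_trans; [apply Rle_abs | apply hM].
Qed.
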